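(* Let $F=\sum_{g\ge0}\lambda^{2g-2}F_g$ be the dessin free energy (defined in the context) and define $$G_{0,2}(x_1,x_2)=\sum_{a,b\ge1} ab\,\frac{\partial^2F_0}{\partial p_a\partial p_b}\Big|_{p=0}\,x_1^{-a-1}x_2^{-b-1}.$$ Then, as formal series in $x_1^{-1},x_2^{-1}$, $$G_{0,2}(x_1,x_2)=\frac{1-\frac{s(u+v)}{x_1}-\frac{s(u+v)}{x_2}+\frac{s^2(u-v)^2}{x_1x_2}}{2(x_1-x_2)^2\sqrt{\Big(1-\frac{2s(u+v)}{x_1}+\frac{s^2(u-v)^2}{x_1^2}\Big)\Big(1-\frac{2s(u+v)}{x_2}+\frac{s^2(u-v)^2}{x_2^2}\Big)}}-\frac{1}{2(x_1-x_2)^2},$$ where the square roots are the power series in $x_i^{-1}$ with constant term $1$.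
   Context: Let $s,u,v$ be parameters and $\lambda$ a genus-tracking parameter. For $n\ge0$ define $$L_n=-\frac{n+1}{s}\frac{\partial}{\partial p_{n+1}}+(u+v)n\frac{\partial}{\partial p_n}+\sum_{j\ge1}p_j(n+j)\frac{\partial}{\partial p_{n+j}}+\lambda^2\sum_{i+j=n,\ i,j\ge1}ij\frac{\partial^2}{\partial p_i\partial p_j}+\delta_{n,0}\,uv\,\lambda^{-2}.$$ The dessin free energy $F=\sum_{g\ge0}\lambda^{2g-2}F_g$ (logarithm of the Kazarian–Zograf generating series of Grothendieck's dessins d'enfants, each $F_g$ a formal power series in $p_1,p_2,\dots$ vanishing at $p=0$) is characterized by $L_ne^F=0$ for all $n\ge0$. *)

From HB Require Import structures.
From mathcomp Require Import all_boot all_order all_algebra.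
Set Implicit Arguments. Unset Strict Implicit. Unset Printing Implicit Defensive.
Import GRing.Theory.
Local Open Scope ring_scope.

(* Formal power series in infinitely many variables p_1, p_2, ...          *)
(* A monomial is an exponent vector m : seq nat, with the exponent of p_i  *)
(* (i >= 1) being  nth 0 m (i-1).  Trailing zeros are irrelevant: a series *)
(* f : series R is only ever read through [coef], which first trims them.  *)

Fixpoint trim (m : seq nat) : seq nat :=
  match m with
  | [::] => [::]
  | a :: m' => let t := trim m' in
               if (a == 0%N) && (t == [::]) then [::] else a :: t
  end.

Definition series (R : Type) := seq nat -> R.

Section Series.
Variable R : comUnitRingType.

Definition coef (f : series R) (m : seq nat) : R := f (trim m).

Definition expo (m : seq nat) (i : nat) : nat := nth 0%N m i.-1.

Definition dp (i : nat) (f : series R) : series R :=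
  fun m => (expo m i).+1%:R * coef f (incr_nth m i.-1).

Definition mulp (j : nat) (f : series R) : series R :=
  fun m => if (0 < expo m j)%N then coef f (set_nth 0%N m j.-1 (expo m j).-1)
           else 0.

Fixpoint boxes (m : seq nat) : seq (seq nat) :=
  match m with
  | [::] => [:: [::]]
  | a :: m' => [seq i :: k | i <- iota 0 a.+1, k <- boxes m']
  end.

Definition subm (m k : seq nat) : seq nat := [seq (x.1 - x.2)%N | x <- zip m k].

Definition smul (f g : series R) : series R :=
  fun m => \sum_(k <- boxes m) coef f k * coef g (subm m k).

(* The constraints L_n e^F = 0, n >= 0, written genus by genus.            *)
(* With F = sum_g lambda^(2g-2) F_g, the coefficient of lambda^(2g-2) in   *)
(* e^{-F} L_n e^F, evaluated at the monomial m, is [vir_eq s u v F g n m]: *)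
Definition vir_eq (s u v : R) (F : nat -> series R) (g n : nat)
    (m : seq nat) : R :=
  - (n.+1%:R / s) * dp n.+1 (F g) m
  + (u + v) * n%:R * (if n is 0 then 0 else dp n (F g) m)
  + \sum_(1 <= j < (size m).+1) (n + j)%N%:R * mulp j (dp (n + j) (F g)) m
  + \sum_(1 <= i < n) (i * (n - i))%N%:R *
      ((if g is g'.+1 then dp i (dp (n - i) (F g')) m else 0)
       + \sum_(g1 < g.+1) smul (dp i (F g1)) (dp (n - i) (F (g - g1)%N)) m)
  + (if [&& n == 0%N, g == 0%N & trim m == [::]] then u * v else 0).

Definition dessin_free_energy (s u v : R) (F : nat -> series R) : Prop :=
  (forall g, coef (F g) [::] = 0) /\
  (forall g n m, vir_eq s u v F g n m = 0).

(* Formal power series in y1 = x1^{-1}, y2 = x2^{-1}:  b i j = coefficient *)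
(* of y1^i y2^j.                                                           *)
Definition bser := nat -> nat -> R.

Definition bmul (f g : bser) : bser :=
  fun i j => \sum_(k < i.+1) \sum_(l < j.+1) f k l * g (i - k)%N (j - l)%N.
Definition badd (f g : bser) : bser := fun i j => f i j + g i j.
Definition bopp (f : bser) : bser := fun i j => - f i j.
Definition bscale (c : R) (f : bser) : bser := fun i j => c * f i j.
Definition bconst (c : R) : bser :=
  fun i j => if (i == 0%N) && (j == 0%N) then c else 0.
Definition Y1 : bser := fun i j => if (i == 1%N) && (j == 0%N) then 1 else 0.
Definition Y2 : bser := fun i j => if (i == 0%N) && (j == 1%N) then 1 else 0.
Definition inY1 (t : nat -> R) : bser := fun i j => if j == 0%N then t i else 0.
Definition inY2 (t : nat -> R) : bser := fun i j => if i == 0%N then t j else 0.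

Definition umul (t w : nat -> R) : nat -> R :=
  fun k => \sum_(i < k.+1) t i * w (k - i)%N.

Definition Apoly (s u v : R) : nat -> R :=
  fun k => match k with
           | 0 => 1
           | 1 => - (2%:R * s * (u + v))
           | 2 => s ^+ 2 * (u - v) ^+ 2
           | _ => 0
           end.

(* G_{0,2} as a series in y1, y2:
   sum_{a,b>=1} a b (d^2 F_0 / dp_a dp_b)(0) y1^(a+1) y2^(b+1) *)
Definition G02 (F : nat -> series R) : bser :=
  fun i j => if (1 < i)%N && (1 < j)%N then
               (i.-1 * j.-1)%N%:R * dp i.-1 (dp j.-1 (F 0%N)) [::]
             else 0.

Definition Nnum (s u v : R) : bser :=
  badd (bconst 1)
   (badd (bscale (- (s * (u + v))) Y1)
   (badd (bscale (- (s * (u + v))) Y2)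
         (bscale (s ^+ 2 * (u - v) ^+ 2) (bmul Y1 Y2)))).
End Series.

From HB Require Import structures.
From mathcomp Require Import all_boot all_order all_algebra.
From mathcomp Require Import boolp ring.
Set Implicit Arguments. Unset Strict Implicit. Unset Printing Implicit Defensive.
Import GRing.Theory.
Local Open Scope ring_scope.

(* Evaluated at p = 0, the genus-zero constraints give a quadratic recursion
   for g_a = a dF_0/dp_a(0); at first order in p_b they give a recursion for
   the two-point numbers a b d^2F_0/dp_a dp_b(0), linear in them.  For
   Q(y) = sum_a g_a y^a the first one says
     s y Q^2 - (1 - s (u+v) y) Q + s u v y = 0,
   so T = 1 - s (u+v) y - 2 s y Q squares to the discriminant A of this
   quadratic, and T is the square root of A with constant term 1.  The second
   one says H(y1,y2) T(y1) = s y1 K(y1,y2) for the two-point series H, where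
   (y1 - y2)^2 K is expressed through Q(y1), Q(y2) and y2 Q'(y2).  Trading Q
   for T, these give
     2 (y1 - y2)^2 H T(y1) = y1 y2 (T(y2) - T(y1) + (y1 - y2) T'(y2)),
   and multiplying by T(y2), the claim follows from T^2 = A and T T' = A'/2. *)

(** * Formal power series *)

Section PowerSeries.
Variable R : comNzRingType.

Definition fps := nat -> R.
HB.instance Definition _ := gen_eqMixin fps.
HB.instance Definition _ := gen_choiceMixin fps.

Definition fps_add (a b : fps) : fps := fun k => a k + b k.
Definition fps_opp (a : fps) : fps := fun k => - a k.
Definition fps_mul (a b : fps) : fps := fun k => \sum_(i < k.+1) a i * b (k - i)%N.
Definition fpsC (c : R) : fps := fun k => if k == 0%N then c else 0.

Fact fps_addA : associative fps_add.
Proof. by move=> a b c; apply/funext=> k; apply: addrA. Qed.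
Fact fps_addC : commutative fps_add.
Proof. by move=> a b; apply/funext=> k; apply: addrC. Qed.
Fact fps_add0 : left_id (fpsC 0) fps_add.
Proof. by move=> a; apply/funext=> -[|k]; apply: add0r. Qed.
Fact fps_addN : left_inverse (fpsC 0) fps_opp fps_add.
Proof. by move=> a; apply/funext=> -[|k]; apply: addNr. Qed.
HB.instance Definition _ := GRing.isZmodule.Build fps fps_addA fps_addC fps_add0 fps_addN.

Lemma fps_mul_rev a b k : fps_mul a b k = \sum_(i < k.+1) a (k - i)%N * b i.
Proof.
rewrite /fps_mul -(big_mkord xpredT (fun i => a i * b (k - i)%N)) big_nat_rev.
by rewrite big_mkord; apply: eq_bigr => i _; rewrite add0n subSS subKn // -ltnS.
Qed.

Fact fps_mulC : commutative fps_mul.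
Proof.
move=> a b; apply/funext=> k; rewrite fps_mul_rev.
by apply: eq_bigr => i _; rewrite mulrC.
Qed.

Fact fps_mulA : associative fps_mul.
Proof.
move=> a b c; apply/funext=> k; rewrite [RHS]fps_mul_rev.
pose t i j := a i * (b (k - i - j)%N * c j).
transitivity (\sum_(i < k.+1) \sum_(j < k.+1 | (j <= k - i)%N) t i j).
  apply: eq_bigr => i _; rewrite fps_mul_rev big_distrr /=.
  by rewrite (big_ord_narrow_leq (leq_subr _ _)).
rewrite (exchange_big_dep predT) //=; apply: eq_bigr => j _.
transitivity (\sum_(i < k.+1 | (i <= k - j)%N) t i j).
  apply: eq_bigl => i; rewrite -ltnS -(ltnS i) -!subSn ?leq_ord //.
  by rewrite -subn_gt0 -(subn_gt0 i) -!subnDA addnC.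
rewrite (big_ord_narrow_leq (leq_subr _ _)) big_distrl /=.
by apply: eq_bigr => i _; rewrite /t -!subnDA addnC mulrA.
Qed.

Fact fps_mul1 : left_id (fpsC 1) fps_mul.
Proof.
move=> a; apply/funext=> k; rewrite /fps_mul big_ord_recl mul1r subn0.
by rewrite big1 ?addr0 // => i _; rewrite mul0r.
Qed.

Fact fps_mulDl : left_distributive fps_mul fps_add.
Proof.
move=> a b c; apply/funext=> k; rewrite /fps_mul /fps_add -big_split /=.
by apply: eq_bigr => i _; rewrite mulrDl.
Qed.

Fact fps_one_neq0 : fpsC 1 != fpsC 0.
Proof. by apply/eqP => /(congr1 (fun a => a 0%N)) /eqP; rewrite oner_eq0. Qed.

HB.instance Definition _ :=
  GRing.Zmodule_isComNzRing.Build fps fps_mulA fps_mulC fps_mul1 fps_mulDl fps_one_neq0.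

Lemma fpsDE (a b : fps) k : (a + b) k = a k + b k. Proof. by []. Qed.
Lemma fpsBE (a b : fps) k : (a - b) k = a k - b k. Proof. by []. Qed.
Lemma fpsME (a b : fps) k : (a * b) k = \sum_(i < k.+1) a i * b (k - i)%N.
Proof. by []. Qed.
Lemma fps0E k : (0 : fps) k = 0. Proof. by case: k. Qed.
Lemma fps1E k : (1 : fps) k = (k == 0%N)%:R. Proof. by case: k. Qed.

Lemma fpsM0 (a b : fps) : (a * b) 0%N = a 0%N * b 0%N.
Proof. by rewrite fpsME big_ord1. Qed.

Lemma fps_sumE I (r : seq I) (P : pred I) (a : I -> fps) k :
  (\sum_(i <- r | P i) a i) k = \sum_(i <- r | P i) a i k.
Proof. exact: (big_morph (fun a : fps => a k) (fun a b => fpsDE a b k) (fps0E k)). Qed.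

Fact fpsC_is_zmod_morphism : zmod_morphism fpsC.
Proof. by move=> a b; apply/funext=> -[|k]; rewrite fpsBE /= ?subr0. Qed.
HB.instance Definition _ := GRing.isZmodMorphism.Build R fps fpsC fpsC_is_zmod_morphism.

Lemma fpsCM c (a : fps) k : (fpsC c * a) k = c * a k.
Proof. by rewrite fpsME big_ord_recl subn0 big1 ?addr0 // => i _; rewrite mul0r. Qed.

Fact fpsC_is_monoid_morphism : monoid_morphism fpsC.
Proof.
split=> [|a b]; first by [].
by apply/funext=> -[|k]; rewrite fpsCM /fpsC /= ?mulr0.
Qed.
HB.instance Definition _ := GRing.isMonoidMorphism.Build R fps fpsC fpsC_is_monoid_morphism.

Lemma fps_natM n (a : fps) k : (n%:R * a) k = n%:R * a k.
Proof. by rewrite -(rmorph_nat fpsC) fpsCM. Qed.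

Definition fpsX : fps := fun k => (k == 1%N)%:R.

Lemma fpsXM (a : fps) k : (fpsX * a) k = if k is k'.+1 then a k' else 0.
Proof.
case: k => [|k]; first by rewrite fpsME big_ord1 mul0r.
rewrite fpsME !big_ord_recl /= mul0r mul1r add0r subn1 big1 ?addr0 // => i _.
by rewrite mul0r.
Qed.

Definition fps_deriv (a : fps) : fps := fun k => k.+1%:R * a k.+1.

Fact fps_deriv_is_zmod_morphism : zmod_morphism fps_deriv.
Proof. by move=> a b; apply/funext=> k; rewrite /fps_deriv fpsBE mulrBr. Qed.
HB.instance Definition _ :=
  GRing.isZmodMorphism.Build fps fps fps_deriv fps_deriv_is_zmod_morphism.

Lemma fps_derivM (a b : fps) : fps_deriv (a * b) = fps_deriv a * b + a * fps_deriv b.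
Proof.
apply/funext=> k; rewrite fpsDE !fpsME /fps_deriv fpsME mulr_sumr.
have split_weight i : (i <= k.+1)%N ->
    k.+1%:R * (a i * b (k.+1 - i)%N)
    = i%:R * (a i * b (k.+1 - i)%N) + (k.+1 - i)%N%:R * (a i * b (k.+1 - i)%N).
  by move=> le_ik; rewrite -mulrDl -natrD subnKC.
rewrite (eq_bigr _ (fun (i : 'I_k.+2) _ => split_weight i (ltn_ord i))) big_split /=.
congr (_ + _).
  rewrite big_ord_recl mul0r add0r; apply: eq_bigr => i _.
  by rewrite subSS mulrA.
rewrite big_ord_recr /= subnn mul0r addr0; apply: eq_bigr => i _.
by rewrite subSn 1?mulrCA // -ltnS.
Qed.

Lemma fps_deriv_sq (a : fps) : fps_deriv (a * a) = 2 * (a * fps_deriv a).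
Proof. by rewrite fps_derivM; ring. Qed.

Lemma fps_derivC c : fps_deriv (fpsC c) = 0.
Proof. by apply/funext=> k; rewrite /fps_deriv fps0E /fpsC mulr0. Qed.

Lemma fps_deriv1 : fps_deriv 1 = 0.
Proof. by rewrite -(rmorph1 fpsC) fps_derivC. Qed.

Lemma fps_deriv_nat n : fps_deriv n%:R = 0.
Proof. by rewrite -(rmorph_nat fpsC) fps_derivC. Qed.

Lemma fps_derivX : fps_deriv fpsX = 1.
Proof. by apply/funext=> -[|k]; rewrite /fps_deriv /fpsX fps1E /= ?mulr1 ?mulr0. Qed.

End PowerSeries.

Section PowerSeriesMap.
Variables (R S : comNzRingType) (f : {rmorphism R -> S}).

Definition fps_map (a : fps R) : fps S := fun k => f (a k).

Fact fps_map_is_zmod_morphism : zmod_morphism fps_map.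
Proof. by move=> a b; apply/funext=> k; rewrite /fps_map fpsBE rmorphB. Qed.
HB.instance Definition _ :=
  GRing.isZmodMorphism.Build (fps R) (fps S) fps_map fps_map_is_zmod_morphism.

Fact fps_map_is_monoid_morphism : monoid_morphism fps_map.
Proof.
split=> [|a b]; apply/funext=> k; rewrite /fps_map.
  by rewrite !fps1E rmorph_nat.
by rewrite !fpsME rmorph_sum; apply: eq_bigr => i _; rewrite rmorphM.
Qed.
HB.instance Definition _ :=
  GRing.isMonoidMorphism.Build (fps R) (fps S) fps_map fps_map_is_monoid_morphism.

Lemma fps_mapC c : fps_map (fpsC c) = fpsC (f c).
Proof. by apply/funext=> -[|k]; rewrite /fps_map /fpsC /= ?rmorph0. Qed.

Lemma fps_mapX : fps_map (fpsX R) = fpsX S.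
Proof. by apply/funext=> k; rewrite /fps_map /fpsX rmorph_nat. Qed.

End PowerSeriesMap.

Section PowerSeriesIdomain.
Variable R : idomainType.

Lemma fps_mul_eq0 (a b : fps R) : a * b = 0 -> b 0%N != 0 -> a = 0.
Proof.
move=> ab0 b0_neq0; apply/funext=> k; rewrite fps0E.
elim/ltn_ind: k => k IH.
have := congr1 (fun c : fps R => c k) ab0; rewrite fpsME fps0E big_ord_recr /= subnn.
rewrite big1 ?add0r => [/eqP|i _]; last by rewrite IH ?mul0r.
by rewrite mulf_eq0 (negPf b0_neq0) orbF => /eqP.
Qed.

Lemma fps_sqrt_unique (a b : fps R) : 2 != 0 :> R ->
  a 0%N = 1 -> b 0%N = 1 -> a * a = b * b -> a = b.
Proof.
move=> two_neq0 a0 b0 sq_ab; apply/eqP; rewrite -subr_eq0; apply/eqP.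
apply: (@fps_mul_eq0 _ (a + b)); first by rewrite -subr_sqr !expr2 sq_ab subrr.
by rewrite fpsDE a0 b0.
Qed.

End PowerSeriesIdomain.

(* Z : fps2 R is a series in y1 = fpsX (fps R) and y2 = fpsC (fpsX R), with
   Z i j the coefficient of y1^i y2^j, as in the type [bser R]. *)
Notation fps2 R := (fps (fps R)).

Section BivariateCoefficients.
Variable R : comNzRingType.

Lemma coef_fpsXM2 (Z : fps2 R) i j :
  (fpsX (fps R) * Z) i j = if i is i'.+1 then Z i' j else 0.
Proof. by rewrite fpsXM; case: i => [|i]; rewrite ?fps0E. Qed.

Lemma coef_fpsCXM2 (Z : fps2 R) i j :
  (fpsC (fpsX R) * Z) i j = if j is j'.+1 then Z i j' else 0.
Proof. by rewrite fpsCM fpsXM. Qed.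

Lemma coef_fps_mapCM2 (t : fps R) (Z : fps2 R) i j :
  (fps_map (@fpsC R : {rmorphism R -> fps R}) t * Z) i j
  = \sum_(k < i.+1) t k * Z (i - k)%N j.
Proof. by rewrite fpsME fps_sumE; apply: eq_bigr => k _; rewrite fpsCM. Qed.

End BivariateCoefficients.

Section BivariateEncoding.
Variable R : comUnitRingType.

Lemma umulE (t w : nat -> R) : umul t w = (t : fps R) * w.
Proof. by []. Qed.

Lemma bmulE (f g : bser R) : bmul f g = (f : fps2 R) * g.
Proof.
apply/funext=> i; apply/funext=> j; rewrite /bmul fpsME fps_sumE.
by apply: eq_bigr => k _; rewrite fpsME.
Qed.

Lemma baddE (f g : bser R) : badd f g = (f : fps2 R) + g.
Proof. by []. Qed.

Lemma boppE (f : bser R) : bopp f = - (f : fps2 R).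
Proof. by []. Qed.

Lemma bconstE (c : R) : bconst c = fpsC (fpsC c).
Proof. by apply/funext=> -[|i]; apply/funext=> -[|j]. Qed.

Lemma bscaleE (c : R) (f : bser R) : bscale c f = fpsC (fpsC c) * (f : fps2 R).
Proof. by apply/funext=> i; apply/funext=> j; rewrite !fpsCM. Qed.

Lemma Y1E : Y1 R = fpsX (fps R).
Proof. by apply/funext=> -[|[|i]]; apply/funext=> -[|j]. Qed.

Lemma Y2E : Y2 R = fpsC (fpsX R).
Proof. by apply/funext=> -[|i]; apply/funext=> -[|[|j]]. Qed.

Lemma inY1E (t : nat -> R) : inY1 t = fps_map (@fpsC R : {rmorphism R -> fps R}) t.
Proof. by []. Qed.

Lemma inY2E (t : nat -> R) : inY2 t = fpsC (t : fps R).
Proof. by apply/funext=> -[|i]; apply/funext=> j; rewrite /inY2 /fpsC /= ?fps0E. Qed.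

End BivariateEncoding.

(** * Genus-zero constraints near p = 0 *)

Lemma sumr_ord_interior (V : nmodType) (G : nat -> V) n :
  G 0%N = 0 -> G n = 0 -> \sum_(i < n.+1) G i = \sum_(1 <= i < n) G i.
Proof.
move=> G0 Gn; rewrite -(big_mkord xpredT).
case: n Gn => [|n] Gn; first by rewrite big_nat1 G0 big_geq.
by rewrite big_nat_recr //= Gn addr0 big_ltn // G0 add0r.
Qed.

Lemma sumr_conv_rev (V : comPzRingType) (x y : nat -> V) n :
  \sum_(1 <= i < n) y i * x (n - i)%N = \sum_(1 <= i < n) x i * y (n - i)%N.
Proof.
rewrite big_nat_rev; apply: eq_big_nat => i /andP[_ lt_in].
by rewrite add1n subSS subKn 1?mulrC // ltnW.
Qed.

(* [incr_nth [::] k] is the exponent vector of the monomial p_(k+1). *)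
Lemma incr_nth_nil k : incr_nth [::] k = ncons k 0%N [:: 1%N].
Proof. by case: k. Qed.

Lemma trim_nseq0 k : trim (nseq k 0%N) = [::].
Proof. by elim: k => //= k ->. Qed.

Lemma trim_incr_nth_nil k : trim (incr_nth [::] k) = incr_nth [::] k.
Proof. by rewrite incr_nth_nil; elim: k => //= k ->; case: k. Qed.

Lemma boxes_incr_nth_nil k : boxes (incr_nth [::] k) = [:: nseq k.+1 0%N; incr_nth [::] k].
Proof. by rewrite !incr_nth_nil; elim: k => //= k ->. Qed.

Lemma subm_nseq0 m : subm m (nseq (size m) 0%N) = m.
Proof. by elim: m => //= a m; rewrite /subm /= subn0 => ->. Qed.

Lemma submm m : subm m m = nseq (size m) 0%N.
Proof. by elim: m => //= a m; rewrite /subm /= subnn => ->. Qed.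

Lemma set_nth_incr_nth_nil k : set_nth 0%N (incr_nth [::] k) k 0%N = nseq k.+1 0%N.
Proof. by rewrite incr_nth_nil; elim: k => //= k ->. Qed.

Section MonomialCoefficients.
Variable R : comUnitRingType.
Implicit Types f g : series R.

Lemma coef_nseq0 f k : coef f (nseq k 0%N) = f [::].
Proof. by rewrite /coef trim_nseq0. Qed.

Lemma coef_incr_nth_nil f k : coef f (incr_nth [::] k) = f (incr_nth [::] k).
Proof. by rewrite /coef trim_incr_nth_nil. Qed.

Lemma smul_incr_nth_nil f g k :
  smul f g (incr_nth [::] k) = f [::] * g (incr_nth [::] k) + f (incr_nth [::] k) * g [::].
Proof.
rewrite /smul boxes_incr_nth_nil big_cons big_seq1.
have size_e : size (incr_nth [::] k) = k.+1 by rewrite size_incr_nth.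
by rewrite -{2}size_e subm_nseq0 submm size_e !coef_nseq0 !coef_incr_nth_nil.
Qed.

Lemma dp_incr_nth_nil f a b : dp a.+1 f (incr_nth [::] b) = dp a.+1 (dp b.+1 f) [::].
Proof.
rewrite /dp /expo /= !nth_incr_nth /= incr_nthC /coef trim_incr_nth_nil.
by rewrite nth_incr_nth !nth_nil eq_sym mul1r.
Qed.

End MonomialCoefficients.

Section GenusZero.
Variables (R : fieldType) (s u v : R) (F : nat -> series R).
Hypothesis s_neq0 : s != 0.
Hypothesis vir_genus0 : forall n m, vir_eq s u v F 0 n m = 0.

Definition one_point : fps R := fun a => a%:R * dp a (F 0%N) [::].
Definition two_point : fps2 R := fun a b => (a * b)%:R * dp a (dp b (F 0%N)) [::].

Lemma one_point0 : one_point 0 = 0.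
Proof. by rewrite /one_point mul0r. Qed.

Lemma vir_eq_nil n : vir_eq s u v F 0 n [::] =
  - (n.+1%:R / s) * dp n.+1 (F 0%N) [::]
  + (u + v) * n%:R * (if n is 0 then 0 else dp n (F 0%N) [::])
  + \sum_(1 <= i < n) (i * (n - i))%:R * (dp i (F 0%N) [::] * dp (n - i) (F 0%N) [::])
  + (n == 0%N)%:R * (u * v).
Proof.
rewrite /vir_eq big_geq // addr0; congr (_ + _ + _).
  by apply: eq_bigr => i _; rewrite add0r big_ord1 subnn /smul /= big_seq1.
by case: (n == 0%N); rewrite ?mul1r ?mul0r.
Qed.

Lemma one_point_rec n :
  one_point n.+1 = s * ((u + v) * one_point n + (one_point * one_point) n
                        + (n == 0%N)%:R * (u * v)).
Proof.
have := vir_genus0 n [::]; rewrite vir_eq_nil.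
have -> : (u + v) * n%:R * (if n is 0 then 0 else dp n (F 0%N) [::])
          = (u + v) * one_point n.
  by case: n => [|n]; rewrite /one_point /=; ring.
rewrite fpsME (sumr_ord_interior (G := fun i => one_point i * one_point (n - i)%N)).
- under eq_bigr do rewrite natrM mulrACA.
  move=> vir_n; apply/eqP; rewrite -subr_eq0; apply/eqP.
  transitivity (- s * 0); last by rewrite mulr0.
  by rewrite -[in RHS]vir_n /one_point; field.
- by rewrite one_point0 mul0r.
- by rewrite subnn one_point0 mulr0.
Qed.

Lemma vir_eq_incr_nth_nil n b : vir_eq s u v F 0 n (incr_nth [::] b) =
  - (n.+1%:R / s) * dp n.+1 (dp b.+1 (F 0%N)) [::]
  + (u + v) * n%:R * (if n is 0 then 0 else dp n (dp b.+1 (F 0%N)) [::])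
  + (n + b.+1)%:R * dp (n + b.+1) (F 0%N) [::]
  + \sum_(1 <= i < n) (i * (n - i))%:R *
      (dp i (F 0%N) [::] * dp (n - i) (dp b.+1 (F 0%N)) [::]
       + dp i (dp b.+1 (F 0%N)) [::] * dp (n - i) (F 0%N) [::]).
Proof.
have e_neq_nil : (trim (incr_nth [::] b) == [::]) = false.
  by rewrite trim_incr_nth_nil incr_nth_nil; case: b.
rewrite /vir_eq e_neq_nil !andbF addr0 dp_incr_nth_nil; congr (_ + _ + _ + _).
- by case: n => // n; rewrite dp_incr_nth_nil.
- rewrite size_incr_nth /= big_nat_recr //= big1_seq ?add0r; last first.
    move=> j /andP[_]; rewrite mem_index_iota => /andP[j_gt0 lt_jb].
    rewrite /mulp /expo nth_incr_nth nth_nil addn0.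
    case: j j_gt0 lt_jb => // j _; rewrite ltnS => lt_jb.
    by rewrite /= (gtn_eqF lt_jb) mulr0.
  rewrite /mulp /expo nth_incr_nth eqxx nth_nil /= set_nth_incr_nth_nil coef_nseq0.
  by rewrite addnS.
- apply: eq_big_nat => i /andP[i_gt0 lt_in].
  rewrite add0r big_ord1 subnn smul_incr_nth_nil.
  case: i i_gt0 lt_in => // i _ lt_in.
  have [k ->] : exists k, (n - i.+1)%N = k.+1.
    by exists (n - i.+1).-1; rewrite prednK // subn_gt0.
  by rewrite !dp_incr_nth_nil.
Qed.

Lemma two_point_rec n b :
  two_point n.+1 b.+1
  = s * ((u + v) * two_point n b.+1 + b.+1%:R * one_point (n + b.+1)
         + 2 * \sum_(i < n.+1) one_point i * two_point (n - i)%N b.+1).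
Proof.
have := vir_genus0 n (incr_nth [::] b); rewrite vir_eq_incr_nth_nil.
pose x i := i%:R * dp i (F 0%N) [::].
pose y i := i%:R * dp i (dp b.+1 (F 0%N)) [::].
have -> : (u + v) * n%:R * (if n is 0 then 0 else dp n (dp b.+1 (F 0%N)) [::])
          = (u + v) * n%:R * dp n (dp b.+1 (F 0%N)) [::].
  by case: n => [|n]; rewrite ?mulr0 ?mul0r.
have -> : \sum_(1 <= i < n) (i * (n - i))%:R *
      (dp i (F 0%N) [::] * dp (n - i) (dp b.+1 (F 0%N)) [::]
       + dp i (dp b.+1 (F 0%N)) [::] * dp (n - i) (F 0%N) [::])
    = 2 * \sum_(1 <= i < n) x i * y (n - i)%N.
  rewrite mulr2n mulrDl mul1r -{2}sumr_conv_rev -big_split /=.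
  by apply: eq_big_nat => i _; rewrite /x /y natrM; ring.
have -> : \sum_(i < n.+1) one_point i * two_point (n - i)%N b.+1
          = b.+1%:R * \sum_(1 <= i < n) x i * y (n - i)%N.
  rewrite (sumr_ord_interior (G := fun i => one_point i * two_point (n - i)%N b.+1)).
  - rewrite mulr_sumr; apply: eq_bigr => i _.
    by rewrite /one_point /two_point /x /y natrM; ring.
  - by rewrite one_point0 mul0r.
  - by rewrite subnn /two_point mul0n mul0r mulr0.
move=> vir_nb; apply/eqP; rewrite -subr_eq0; apply/eqP.
transitivity (- (s * b.+1%:R) * 0); last by rewrite mulr0.
by rewrite -[in RHS]vir_nb /two_point /one_point !natrM; field.
Qed.

End GenusZero.

(** * The one-point series and the discriminant *)

Section OnePointSeries.
Variables (R : fieldType) (s u v : R) (F : nat -> series R).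
Hypothesis s_neq0 : s != 0.
Hypothesis vir_genus0 : forall n m, vir_eq s u v F 0 n m = 0.

Local Notation Q := (one_point F).
Local Notation X := (fpsX R).

Lemma one_point_eq : Q = fpsC s * (fpsC (u + v) * (X * Q) + X * (Q * Q) + fpsC (u * v) * X).
Proof.
apply/funext=> -[|n]; rewrite fpsCM !fpsDE !fpsCM !fpsXM.
  by rewrite one_point0 /fpsX /= !(mulr0, addr0).
by rewrite (one_point_rec s_neq0 vir_genus0) /fpsX eqSS [_%:R * _]mulrC.
Qed.

Definition disc_sqrt : fps R := 1 - fpsC s * fpsC (u + v) * X - 2 * fpsC s * (X * Q).

Lemma disc_sqrt0 : disc_sqrt 0%N = 1.
Proof. by rewrite /disc_sqrt !fpsBE !fpsM0 fps1E /fpsX /= !(mul0r, mulr0, subr0). Qed.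

Lemma Apoly_fps : (Apoly s u v : fps R)
  = 1 - 2 * fpsC s * fpsC (u + v) * X + fpsC s ^+ 2 * fpsC (u - v) ^+ 2 * X ^+ 2.
Proof.
have -> : 2 * fpsC s * fpsC (u + v) * X = fpsC (2 * s * (u + v)) * X by ring.
have -> : fpsC s ^+ 2 * fpsC (u - v) ^+ 2 * X ^+ 2
          = fpsC (s ^+ 2 * (u - v) ^+ 2) * (X * X) by ring.
apply/funext=> k; rewrite fpsDE fpsBE fps1E !fpsCM fpsXM.
by case: k => [|[|[|k]]]; rewrite /Apoly /fpsX /=; ring.
Qed.

Lemma disc_sqrt_sq : disc_sqrt * disc_sqrt = Apoly s u v.
Proof.
rewrite Apoly_fps; apply/eqP; rewrite -subr_eq0; apply/eqP.
transitivity (- (2 * 2) * fpsC s * X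
              * (Q - fpsC s * (fpsC (u + v) * (X * Q) + X * (Q * Q) + fpsC (u * v) * X))).
  by rewrite /disc_sqrt; ring.
by rewrite -one_point_eq subrr mulr0.
Qed.

Lemma disc_sqrt_deriv :
  fps_deriv disc_sqrt = - (fpsC s * fpsC (u + v)) - 2 * fpsC s * (Q + X * fps_deriv Q).
Proof.
rewrite /disc_sqrt !raddfB /= !fps_derivM.
by rewrite fps_deriv1 fps_deriv_nat !fps_derivC fps_derivX; ring.
Qed.

Lemma Apoly_deriv : fps_deriv (Apoly s u v)
  = 2 * (- (fpsC s * fpsC (u + v)) + fpsC s ^+ 2 * fpsC (u - v) ^+ 2 * X).
Proof.
have -> : 2 * (- (fpsC s * fpsC (u + v)) + fpsC s ^+ 2 * fpsC (u - v) ^+ 2 * X)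
          = fpsC (- (2 * s * (u + v))) + fpsC (2 * s ^+ 2 * (u - v) ^+ 2) * X by ring.
apply/funext=> k; rewrite /fps_deriv fpsDE fpsCM.
by case: k => [|[|k]]; rewrite /Apoly /fpsC /fpsX /=; ring.
Qed.

Lemma mul_deriv_of_sq_Apoly (T : fps R) : 2 != 0 :> R -> T * T = Apoly s u v ->
  T * fps_deriv T = - (fpsC s * fpsC (u + v)) + fpsC s ^+ 2 * fpsC (u - v) ^+ 2 * X.
Proof.
move=> two_neq0 sqT; apply/funext=> k.
have := congr1 (fun a : fps R => a k) (fps_deriv_sq T).
by rewrite sqT Apoly_deriv !fps_natM => /(mulfI two_neq0).
Qed.

End OnePointSeries.

(** * The two-point series *)

Section TwoPointSeries.
Variables (R : fieldType) (s u v : R) (F : nat -> series R).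
Hypothesis s_neq0 : s != 0.
Hypothesis vir_genus0 : forall n m, vir_eq s u v F 0 n m = 0.

Local Notation Q := (one_point F).
Local Notation H := (two_point F).
Local Notation T := (disc_sqrt s u v F).
Local Notation Y1 := (fpsX (fps R)).
Local Notation Y2 := (fpsC (fpsX R)).
Local Notation mapC := (fps_map (@fpsC R : {rmorphism R -> fps R})).
Local Notation bC c := (fpsC (fpsC c)).

(* y2 d/dy2 of (y1 Q(y1) - y2 Q(y2)) / (y1 - y2) *)
Definition one_point_cross : fps2 R := fun n b => b%:R * Q (n + b)%N.

(* y1 y2 (Q(y1) - Q(y2)) / (y1 - y2) *)
Definition one_point_divdiff : fps2 R :=
  fun i j => if i is i'.+1 then if j is j'.+1 then Q (i' + j').+1 else 0 else 0.

Local Notation K := one_point_cross.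
Local Notation M := one_point_divdiff.

Lemma two_point_eq : H = bC s * (bC (u + v) * (Y1 * H) + Y1 * K + 2 * (Y1 * (mapC Q * H))).
Proof.
apply/funext=> i; apply/funext=> j.
rewrite !(fpsCM, fpsDE, fps_natM, coef_fpsXM2).
case: i => [|n]; first by rewrite /two_point mul0n mul0r; ring.
rewrite coef_fps_mapCM2; case: j => [|b]; last by rewrite (two_point_rec s_neq0 vir_genus0).
by rewrite big1 => [|k _]; rewrite /two_point /one_point_cross !muln0; ring.
Qed.

Lemma cross_eq : (Y1 - Y2) * K = M - Y2 * fpsC (fpsX R * fps_deriv Q).
Proof.
apply/funext=> i; apply/funext=> j.
rewrite mulrBl !fpsBE coef_fpsXM2 !coef_fpsCXM2.
case: i => [|i]; case: j => [|j]; rewrite /one_point_cross /one_point_divdiff /fpsC /= ?fps0E.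
- by rewrite subr0.
- by rewrite add0n fpsXM; case: j => [|j]; rewrite /fps_deriv /=; ring.
- by rewrite mul0r subr0.
- by rewrite addnS addSn; ring.
Qed.

Lemma divdiff_eq : (Y1 - Y2) * M = Y1 * Y2 * (mapC Q - fpsC Q).
Proof.
apply/funext=> i; apply/funext=> j.
rewrite mulrBl -mulrA !fpsBE -inY1E.
case: i => [|[|i]]; case: j => [|[|j]]; rewrite !(coef_fpsXM2, coef_fpsCXM2) ?fpsBE;
  by rewrite /one_point_divdiff /inY1 /fpsC /= ?fps0E ?add0n ?addn0 ?addnS ?addSn ?one_point0;
     ring.
Qed.

Lemma G02_eq : G02 F = Y1 * Y2 * H.
Proof.
apply/funext=> i; apply/funext=> j; rewrite -mulrA.
by case: i => [|[|i]]; case: j => [|[|j]];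
  rewrite !(coef_fpsXM2, coef_fpsCXM2) /G02 /two_point ?mul0n ?muln0 ?mul0r.
Qed.

Lemma mapC_disc_sqrt : mapC T = 1 - bC s * bC (u + v) * Y1 - 2 * bC s * (Y1 * mapC Q).
Proof. by rewrite /disc_sqrt !rmorphB rmorph1 !rmorphM rmorph_nat /= !fps_mapC fps_mapX. Qed.

Lemma fpsC_disc_sqrt : fpsC T = 1 - bC s * bC (u + v) * Y2 - 2 * bC s * (Y2 * fpsC Q).
Proof. by rewrite /disc_sqrt; ring. Qed.

Lemma fpsC_disc_sqrt_deriv : fpsC (fps_deriv T)
  = - (bC s * bC (u + v)) - 2 * bC s * (fpsC Q + fpsC (fpsX R * fps_deriv Q)).
Proof. by rewrite disc_sqrt_deriv; ring. Qed.

Lemma fpsC_disc_sqrt_sq :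
  fpsC T * fpsC T = 1 - 2 * bC s * bC (u + v) * Y2 + bC s ^+ 2 * bC (u - v) ^+ 2 * Y2 ^+ 2.
Proof. by rewrite -rmorphM (disc_sqrt_sq s_neq0 vir_genus0) Apoly_fps; ring. Qed.

Lemma fpsC_disc_sqrt_mul_deriv : 2 != 0 :> R ->
  fpsC T * fpsC (fps_deriv T) = - (bC s * bC (u + v)) + bC s ^+ 2 * bC (u - v) ^+ 2 * Y2.
Proof.
move=> two_neq0.
by rewrite -rmorphM (mul_deriv_of_sq_Apoly two_neq0 (disc_sqrt_sq s_neq0 vir_genus0)); ring.
Qed.

End TwoPointSeries.

(* Read with y_i = Y_i, Q_i = Q(y_i), T_i = T(y_i), D2 = T'(y2) and
   E = y2 Q'(y2); the hypotheses are the identities of [TwoPointSeries]. *)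
Lemma two_point_identity (V : comNzRingType) (s a d y1 y2 H K M E Q1 Q2 T1 T2 D2 : V) :
  H = s * (a * (y1 * H) + y1 * K + 2 * (y1 * (Q1 * H))) ->
  (y1 - y2) * K = M - y2 * E ->
  (y1 - y2) * M = y1 * y2 * (Q1 - Q2) ->
  T1 = 1 - s * a * y1 - 2 * s * (y1 * Q1) ->
  T2 = 1 - s * a * y2 - 2 * s * (y2 * Q2) ->
  D2 = - (s * a) - 2 * s * (Q2 + E) ->
  T2 * T2 = 1 - 2 * s * a * y2 + s ^+ 2 * d ^+ 2 * y2 ^+ 2 ->
  T2 * D2 = - (s * a) + s ^+ 2 * d ^+ 2 * y2 ->
  2 * (y1 - y2) ^+ 2 * (y1 * y2 * H) * (T1 * T2)
  = y1 ^+ 2 * y2 ^+ 2 * (1 - s * a * y1 - s * a * y2 + s ^+ 2 * d ^+ 2 * y1 * y2 - T1 * T2).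
Proof.
move=> eH eK eM eT1 eT2 eD2 sqT2 T2D2.
have HT1 : H * T1 = s * y1 * K.
  have -> : H * T1 = H - s * a * (y1 * H) - 2 * s * (y1 * (Q1 * H)) by rewrite eT1; ring.
  by rewrite {1}eH; ring.
have num : 2 * (y1 - y2) ^+ 2 * (H * T1) = y1 * y2 * (T2 - T1 + (y1 - y2) * D2).
  have -> : 2 * (y1 - y2) ^+ 2 * (H * T1) = 2 * s * y1 * ((y1 - y2) * ((y1 - y2) * K)).
    by rewrite HT1; ring.
  by rewrite eK mulrBr eM eT1 eT2 eD2; ring.
transitivity (y1 * y2 * T2 * (2 * (y1 - y2) ^+ 2 * (H * T1))); first by ring.
rewrite num.
transitivity (y1 ^+ 2 * y2 ^+ 2 * (T2 * T2 - T1 * T2 + (y1 - y2) * (T2 * D2))); first by ring.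
by rewrite sqT2 T2D2; ring.
Qed.

Theorem proposition3p1 (R : fieldType) (hR : [pchar R] =i pred0)
    (s u v : R) (hs : s != 0) (F : nat -> series R)
    (hF : dessin_free_energy s u v F)
    (T : nat -> R) (hT0 : T 0%N = 1) (hT : forall k, umul T T k = Apoly s u v k) :
  forall i j : nat,
    bscale 2%:R
      (bmul (bmul (badd (Y1 R) (bopp (Y2 R))) (badd (Y1 R) (bopp (Y2 R))))
            (bmul (G02 F) (bmul (inY1 T) (inY2 T)))) i j
    = bmul (bmul (bmul (Y1 R) (Y1 R)) (bmul (Y2 R) (Y2 R)))
           (badd (Nnum s u v) (bopp (bmul (inY1 T) (inY2 T)))) i j.
Proof.
move=> i j; congr (_ i j).
have two_neq0 : 2 != 0 :> R by have := hR 2%N; rewrite !inE /= => ->.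
have vir0 n m : vir_eq s u v F 0 n m = 0 by case: hF.
have sqT : (T : fps R) * T = Apoly s u v by apply/funext=> k; rewrite -umulE hT.
have T_eq : (T : fps R) = disc_sqrt s u v F.
  by apply: fps_sqrt_unique two_neq0 hT0 (disc_sqrt0 _ _ _ _) _; rewrite sqT disc_sqrt_sq.
rewrite /Nnum !bmulE !baddE !boppE !bscaleE bconstE Y1E Y2E inY1E inY2E G02_eq T_eq.
have := two_point_identity (two_point_eq hs vir0) (cross_eq F) (divdiff_eq F)
  (mapC_disc_sqrt s u v F) (fpsC_disc_sqrt s u v F) (fpsC_disc_sqrt_deriv s u v F)
  (fpsC_disc_sqrt_sq hs vir0) (fpsC_disc_sqrt_mul_deriv hs vir0 two_neq0).
by move=> key; apply: etrans (etrans _ key) _; ring.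
Qed.
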